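(* Let $f(x)=x^5+px^4+qx^3+rx^2+sx+t$ with real coefficients, and suppose $D=0$, $L_1=0$, $L_2\neq 0$ and $D_2=0$ (so $f$ has one triple root and two simple roots). Then the triple root of $f$ is $d=C_{2,1}/L_2$, and $f(y+d)=y^3\bigl(y^2+F_7y+F_6\bigr)$ where $F_7=p+5d$ and $F_6=q+4pd+10d^2$. If $L_2>0$ (all roots real), then: (a) if $F_6>0$ and $F_7<0$: triple $<$ single $<$ single; (b) if $F_6<0$: single $<$ triple $<$ single; (c) if $F_6>0$ and $F_7>0$: single $<$ single $<$ triple.
   Context: Let $\alpha_1,\dots,\alpha_5\in\mathbb{C}$ be the roots of $f$ listed with multiplicity. $D=\prod_{1\le i<j\le 5}(\alpha_i-\alpha_j)^2$ is the discriminant of $f$. $L_2=40qs-16p^2s-8rp^3+38rpq+3p^2q^2-12q^3-45r^2$. $L_1=-264ps^2r-12p^3tq^2+36r^3pq-124srpq^2+28srp^3q+260sptq-132p^2qrt+240pr^2t+234sqr^2+32p^4tr+48ptq^3-56sp^3t-80q^2rt+194qs^2p^2-600str-6q^3sp^2+2p^2q^2r^2-12sr^2p^2-54r^4+320s^3-8q^3r^2-8r^3p^3+250qt^2-176q^2s^2+24q^4s-36p^4s^2-100p^2t^2$. $D_2=24p^2q^4s-1100q^3rt+800p^3qst-1735p^2q^2rt-3p^2qr^2s+20pq^3rs-600p^2rst-1150pq^2st+5475pqr^2t-1380pqrs^2+1500qrst+6p^3qr^3+p^4q^2r^2-128p^6rt+660pq^4t-136p^5st-3p^4q^3s-236p^4qs^2+337p^2q^2s^2+48p^5q^2t-357p^3q^3t-12p^4r^2s-45pr^3s+60q^2r^2s-8p^2q^3r^2-500p^2qt^2-24pq^2r^3-1380p^3r^2t+408p^3rs^2-4p^5qrs+1028p^4qrt+11p^3q^2rs+36p^6s^2+100p^4t^2+9p^2r^4-48q^5s+16q^4r^2+160q^3s^2+625q^2t^2-3375r^3t+900r^2s^2$.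 $C_{2,1}=6sp^3+4q^2r-3pr^2-21spq+30sr+10p^2t-25tq-p^2rq$. *)

(* Complex numbers: an arbitrary numClosedFieldType C
   (algebraically closed, with the real subfield ordered); "real" = Num.real. *)
From HB Require Import structures.
From mathcomp Require Import all_boot all_order all_algebra.
Set Implicit Arguments. Unset Strict Implicit. Unset Printing Implicit Defensive.
Import Order.TTheory GRing.Theory Num.Theory.
Local Open Scope ring_scope.


Definition quintic (C : numClosedFieldType) (p q r s t : C) : {poly C} :=
  'X^5 + p%:P * 'X^4 + q%:P * 'X^3 + r%:P * 'X^2 + s%:P * 'X + t%:P.

Definition L2 (C : numClosedFieldType) (p q r s t : C) : C :=
  40 * q * s - 16 * p ^+ 2 * s - 8 * r * p ^+ 3 + 38 * r * p * q + 3 * p ^+ 2 * q ^+ 2 - 12 * q ^+ 3 - 45 * r ^+ 2.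

Definition L1 (C : numClosedFieldType) (p q r s t : C) : C :=
  - 264 * p * s ^+ 2 * r - 12 * p ^+ 3 * t * q ^+ 2 + 36 * r ^+ 3 * p * q - 124 * s * r * p * q ^+ 2 + 28 * s * r * p ^+ 3 * q
  + 260 * s * p * t * q - 132 * p ^+ 2 * q * r * t + 240 * p * r ^+ 2 * t + 234 * s * q * r ^+ 2 + 32 * p ^+ 4 * t * r
  + 48 * p * t * q ^+ 3 - 56 * s * p ^+ 3 * t - 80 * q ^+ 2 * r * t + 194 * q * s ^+ 2 * p ^+ 2 - 600 * s * t * r
  - 6 * q ^+ 3 * s * p ^+ 2 + 2 * p ^+ 2 * q ^+ 2 * r ^+ 2 - 12 * s * r ^+ 2 * p ^+ 2 - 54 * r ^+ 4 + 320 * s ^+ 3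
  - 8 * q ^+ 3 * r ^+ 2 - 8 * r ^+ 3 * p ^+ 3 + 250 * q * t ^+ 2 - 176 * q ^+ 2 * s ^+ 2 + 24 * q ^+ 4 * s
  - 36 * p ^+ 4 * s ^+ 2 - 100 * p ^+ 2 * t ^+ 2.

Definition D2 (C : numClosedFieldType) (p q r s t : C) : C :=
  24 * p ^+ 2 * q ^+ 4 * s - 1100 * q ^+ 3 * r * t + 800 * p ^+ 3 * q * s * t - 1735 * p ^+ 2 * q ^+ 2 * r * t
  - 3 * p ^+ 2 * q * r ^+ 2 * s + 20 * p * q ^+ 3 * r * s - 600 * p ^+ 2 * r * s * t - 1150 * p * q ^+ 2 * s * t
  + 5475 * p * q * r ^+ 2 * t - 1380 * p * q * r * s ^+ 2 + 1500 * q * r * s * t + 6 * p ^+ 3 * q * r ^+ 3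
  + p ^+ 4 * q ^+ 2 * r ^+ 2 - 128 * p ^+ 6 * r * t + 660 * p * q ^+ 4 * t - 136 * p ^+ 5 * s * t
  - 3 * p ^+ 4 * q ^+ 3 * s - 236 * p ^+ 4 * q * s ^+ 2 + 337 * p ^+ 2 * q ^+ 2 * s ^+ 2 + 48 * p ^+ 5 * q ^+ 2 * t
  - 357 * p ^+ 3 * q ^+ 3 * t - 12 * p ^+ 4 * r ^+ 2 * s - 45 * p * r ^+ 3 * s + 60 * q ^+ 2 * r ^+ 2 * s
  - 8 * p ^+ 2 * q ^+ 3 * r ^+ 2 - 500 * p ^+ 2 * q * t ^+ 2 - 24 * p * q ^+ 2 * r ^+ 3 - 1380 * p ^+ 3 * r ^+ 2 * t
  + 408 * p ^+ 3 * r * s ^+ 2 - 4 * p ^+ 5 * q * r * s + 1028 * p ^+ 4 * q * r * t + 11 * p ^+ 3 * q ^+ 2 * r * s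
  + 36 * p ^+ 6 * s ^+ 2 + 100 * p ^+ 4 * t ^+ 2 + 9 * p ^+ 2 * r ^+ 4 - 48 * q ^+ 5 * s + 16 * q ^+ 4 * r ^+ 2
  + 160 * q ^+ 3 * s ^+ 2 + 625 * q ^+ 2 * t ^+ 2 - 3375 * r ^+ 3 * t + 900 * r ^+ 2 * s ^+ 2.

Definition C21 (C : numClosedFieldType) (p q r s t : C) : C :=
  6 * s * p ^+ 3 + 4 * q ^+ 2 * r - 3 * p * r ^+ 2 - 21 * s * p * q + 30 * s * r + 10 * p ^+ 2 * t - 25 * t * q
  - p ^+ 2 * r * q.


Definition disc5 (C : numClosedFieldType) (alpha : 'I_5 -> C) : C :=
  \prod_(i < 5) \prod_(j < 5 | (i < j)%N) (alpha i - alpha j) ^+ 2.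

From HB Require Import structures.
From mathcomp Require Import all_boot all_order all_algebra.
From mathcomp Require Import ring.
Import Order.TTheory GRing.Theory Num.Theory.
Set Implicit Arguments.
Unset Strict Implicit.
Unset Printing Implicit Defensive.
Local Open Scope ring_scope.

(* D = 0 gives a double root a, and for f = (x-a)^2 (x-b)(x-c)(x-e) one has
   L1 = 2 ((a-b)(a-c)(a-e)(b-c)(b-e)(c-e))^2, so L1 = 0 forces one more
   coincidence.  Two double roots a, b (simple root e) are excluded because then
   L2 = 4 ((a-b)(a-e)(b-e))^2 while D2 = 4 (a-b)^6 (a-e)^4 (b-e)^4.  Hence
   f = (x-a)^3 (x-u)(x-v), and comparing coefficients gives
   L2 = 3 ((u-v)(a-u)(a-v))^2, C21 = a L2, F7 = (a-u)+(a-v), F6 = (a-u)(a-v):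
   so d = a, and when L2 > 0 both u+v and (u-v)^2 >= 0 are real, which makes
   every root real; the signs of F6 and F7 then locate a with respect to u < v. *)

Lemma card_fiber (T : eqType) n (alpha : 'I_n -> T) (a : T) :
  #|[set i | alpha i == a]| = count_mem a (map alpha (enum 'I_n)).
Proof.
rewrite count_map cardsE cardE /enum_mem size_filter count_filter.
by apply: eq_count => i; rewrite !inE andbT.
Qed.

Lemma card_fiber_mu (F : fieldType) n (alpha : 'I_n -> F) (a : F) :
  #|[set i | alpha i == a]| = mup a (\prod_(i < n) ('X - (alpha i)%:P)).
Proof. by rewrite card_fiber -mu_prod_XsubC big_map big_enum. Qed.

Lemma prod_XsubC_repeated (R : comNzRingType) (s : seq R) (a : R) :
  (1 < count_mem a s)%N ->
  exists2 s' : seq R, size s' = (size s - 2)%N &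
    \prod_(x <- s) ('X - x%:P) = ('X - a%:P) ^+ 2 * \prod_(x <- s') ('X - x%:P).
Proof.
move=> a_twice.
have a_s : a \in s by rewrite -has_pred1 has_count ltnW.
have a_rem : a \in rem a s by rewrite -has_pred1 has_count count_mem_rem eqxx subn_gt0.
exists (rem a (rem a s)); first by rewrite !size_rem // subn2.
have s_perm : perm_eq s [:: a, a & rem a (rem a s)].
  by rewrite (permPl (perm_to_rem a_s)) perm_cons perm_to_rem.
by rewrite (perm_big _ s_perm) !big_cons /= mulrA -expr2.
Qed.

Lemma disc5_eq0 (C : numClosedFieldType) (alpha : 'I_5 -> C) :
  disc5 alpha = 0 -> exists i j, i != j /\ alpha i = alpha j.
Proof.
move/eqP; rewrite /disc5 => /prodf_eq0[i _ /prodf_eq0[j ij]].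
rewrite expf_eq0 subr_eq0 => /andP[_ /eqP aij].
by exists i, j; rewrite neq_ltn ij.
Qed.

Lemma disc5_eq0_prod_XsubC (C : numClosedFieldType) (alpha : 'I_5 -> C) :
  disc5 alpha = 0 ->
  exists a b c e : C, \prod_(i < 5) ('X - (alpha i)%:P) =
    ('X - a%:P) ^+ 2 * ('X - b%:P) * ('X - c%:P) * ('X - e%:P).
Proof.
move=> /disc5_eq0[i [j [ij aij]]].
have two_roots : (1 < count_mem (alpha i) (map alpha (enum 'I_5)))%N.
  have ij_fiber : [set i; j] \subset [set k | alpha k == alpha i].
    by apply/subsetP => k; rewrite !inE => /orP[] /eqP->; rewrite ?aij.
  by rewrite -card_fiber; move: (subset_leq_card ij_fiber); rewrite cards2 ij.
have [s' size_s' prod_s'] := prod_XsubC_repeated two_roots.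
rewrite size_map size_enum_ord in size_s'.
move: size_s' prod_s'; case: s' => [|b [|c [|e []]]] //= _.
rewrite big_map big_enum /= => ->.
by exists (alpha i), b, c, e; rewrite !big_cons big_nil mulr1 !mulrA.
Qed.

Lemma quintic_inj (C : numClosedFieldType) (p q r s t p' q' r' s' t' : C) :
  quintic p q r s t = quintic p' q' r' s' t' ->
  [/\ p = p', q = q', r = r', s = s' & t = t'].
Proof.
move=> E; have coef k := congr1 (fun P : {poly C} => P`_k) E.
move: (coef 4%N) (coef 3%N) (coef 2%N) (coef 1%N) (coef 0%N).
by rewrite /quintic !coefE /= !(mulr0, mulr1, addr0, add0r) => -> -> -> -> ->.
Qed.

Lemma quintic_prod_XsubC (C : numClosedFieldType) (x1 x2 x3 x4 x5 : C) :
  ('X - x1%:P) * ('X - x2%:P) * ('X - x3%:P) * ('X - x4%:P) * ('X - x5%:P) =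
  quintic (- (x1 + x2 + x3 + x4 + x5))
   (x1*x2 + x1*x3 + x1*x4 + x1*x5 + x2*x3 + x2*x4 + x2*x5 + x3*x4 + x3*x5 + x4*x5)
   (- (x1*x2*x3 + x1*x2*x4 + x1*x2*x5 + x1*x3*x4 + x1*x3*x5 + x1*x4*x5
       + x2*x3*x4 + x2*x3*x5 + x2*x4*x5 + x3*x4*x5))
   (x1*x2*x3*x4 + x1*x2*x3*x5 + x1*x2*x4*x5 + x1*x3*x4*x5 + x2*x3*x4*x5)
   (- (x1*x2*x3*x4*x5)).
Proof. by rewrite /quintic; ring. Qed.

Lemma L1_double_root (C : numClosedFieldType) (p q r s t a b c e : C) :
  quintic p q r s t = ('X - a%:P) ^+ 2 * ('X - b%:P) * ('X - c%:P) * ('X - e%:P) ->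
  L1 p q r s t = 2 * ((a - b) * (a - c) * (a - e) * (b - c) * (b - e) * (c - e)) ^+ 2.
Proof.
rewrite expr2 quintic_prod_XsubC => /quintic_inj[-> -> -> -> ->].
by rewrite /L1; ring.
Qed.

Lemma D2_two_double_roots_neq0 (C : numClosedFieldType) (p q r s t a b e : C) :
  quintic p q r s t = ('X - a%:P) ^+ 2 * ('X - b%:P) ^+ 2 * ('X - e%:P) ->
  L2 p q r s t != 0 -> D2 p q r s t != 0.
Proof.
move=> f_roots.
have [-> ->] : L2 p q r s t = 4 * ((a - b) * (a - e) * (b - e)) ^+ 2 /\
               D2 p q r s t = 4 * (a - b) ^+ 6 * (a - e) ^+ 4 * (b - e) ^+ 4.
  move: f_roots; rewrite !expr2 mulrA quintic_prod_XsubC.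
  by move=> /quintic_inj[-> -> -> -> ->]; rewrite /L2 /D2; split; ring.
rewrite !mulf_eq0 pnatr_eq0 /=.
by case: (a - b == 0); case: (a - e == 0); case: (b - e == 0).
Qed.

Lemma triple_root_invariants (C : numClosedFieldType) (p q r s t a u v : C) :
  quintic p q r s t = ('X - a%:P) ^+ 3 * ('X - u%:P) * ('X - v%:P) ->
  [/\ L2 p q r s t = 3 * ((u - v) * (a - u) * (a - v)) ^+ 2,
      C21 p q r s t = a * L2 p q r s t,
      p + 5 * a = (a - u) + (a - v)
    & q + 4 * p * a + 10 * a ^+ 2 = (a - u) * (a - v)].
Proof.
rewrite !exprS expr0 mulr1 !mulrA quintic_prod_XsubC => /quintic_inj[-> -> -> -> ->].
by rewrite /L2 /C21; split; ring.
Qed.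

Lemma quintic_triple_root (C : numClosedFieldType) (p q r s t : C) (alpha : 'I_5 -> C) :
  quintic p q r s t = \prod_(i < 5) ('X - (alpha i)%:P) ->
  disc5 alpha = 0 -> L1 p q r s t = 0 -> L2 p q r s t != 0 -> D2 p q r s t = 0 ->
  exists a u v : C,
    quintic p q r s t = ('X - a%:P) ^+ 3 * ('X - u%:P) * ('X - v%:P).
Proof.
move=> f_roots /disc5_eq0_prod_XsubC[a [b [c [e f_abce]]]] L1_0 L2_neq0 D2_0.
rewrite f_abce in f_roots.
have := L1_double_root f_roots; rewrite L1_0 => /esym/eqP.
rewrite mulf_eq0 pnatr_eq0 expf_eq0 /= !mulf_eq0 !subr_eq0.
have two_double_roots x y z : quintic p q r s t =
    ('X - x%:P) ^+ 2 * ('X - y%:P) ^+ 2 * ('X - z%:P) -> False.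
  by move/D2_two_double_roots_neq0/(_ L2_neq0); rewrite D2_0 eqxx.
case/orP=> [/orP[/orP[/orP[/orP[]|]|]|]|] /eqP ab.
- by exists a, c, e; rewrite f_roots -ab; ring.
- by exists a, b, e; rewrite f_roots -ab; ring.
- by exists a, b, c; rewrite f_roots -ab; ring.
- by case: (two_double_roots a b e); rewrite f_roots -ab; ring.
- by case: (two_double_roots a b c); rewrite f_roots -ab; ring.
- by case: (two_double_roots a c b); rewrite f_roots -ab; ring.
Qed.

Lemma triple_root_shift (R : comNzRingType) (a u v : R) :
  (('X - a%:P) ^+ 3 * ('X - u%:P) * ('X - v%:P)) \Po ('X + a%:P) =
  'X^3 * ('X^2 + ((a - u) + (a - v))%:P * 'X + ((a - u) * (a - v))%:P).
Proof.
rewrite !exprS expr0 mulr1 !comp_polyM !comp_polyB comp_polyX !comp_polyC.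
by rewrite !polyCD !polyCM !polyCB; ring.
Qed.

(* [rpred_nat] must come first: a numeral [n%:R] unfolds to a sum, which
   [rpredD] would otherwise split into [n] copies of [1]. *)
Ltac real_closure :=
  do ![apply: rpred_nat | apply: rpredB | apply: rpredD | apply: rpredM | apply: rpredX].

Lemma L2_real (C : numClosedFieldType) (p q r s t : C) :
  p \is Num.real -> q \is Num.real -> r \is Num.real -> s \is Num.real ->
  L2 p q r s t \is Num.real.
Proof. by move=> *; rewrite /L2; real_closure. Qed.

Lemma C21_real (C : numClosedFieldType) (p q r s t : C) :
  p \is Num.real -> q \is Num.real -> r \is Num.real -> s \is Num.real ->
  t \is Num.real -> C21 p q r s t \is Num.real.
Proof. by move=> *; rewrite /C21; real_closure. Qed.

Lemma real_sum_sqr_sub (F : numFieldType) (u v : F) :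
  u + v \is Num.real -> 0 <= (u - v) ^+ 2 -> u \is Num.real /\ v \is Num.real.
Proof.
rewrite -realEsqr => uDv_real uBv_real.
have u_real : u \is Num.real.
  have -> : u = ((u + v) + (u - v)) / 2 by field.
  by apply: rpredM; [apply: rpredD | rewrite rpredV rpred_nat].
split=> //; have -> : v = (u + v) - u by ring.
exact: rpredB.
Qed.

Lemma triple_root_distinct (C : numClosedFieldType) (p q r s t a u v : C) :
  quintic p q r s t = ('X - a%:P) ^+ 3 * ('X - u%:P) * ('X - v%:P) ->
  L2 p q r s t != 0 -> [/\ u != v, a != u & a != v].
Proof.
move=> /triple_root_invariants[-> _ _ _]; rewrite !mulf_eq0 pnatr_eq0 !subr_eq0 /=.
by case: (u == v); case: (a == u); case: (a == v).
Qed.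

Lemma triple_root_real (C : numClosedFieldType) (p q r s t a u v : C) :
  p \is Num.real -> q \is Num.real -> r \is Num.real -> s \is Num.real ->
  t \is Num.real ->
  quintic p q r s t = ('X - a%:P) ^+ 3 * ('X - u%:P) * ('X - v%:P) ->
  0 < L2 p q r s t -> [/\ a \is Num.real, u \is Num.real & v \is Num.real].
Proof.
move=> p_real q_real r_real s_real t_real f_auv L2_gt0.
have [_ au av] := triple_root_distinct f_auv (lt0r_neq0 L2_gt0).
have [L2E C21E F7E F6E] := triple_root_invariants f_auv.
have a_real : a \is Num.real.
  have -> : a = C21 p q r s t / L2 p q r s t by rewrite C21E mulfK ?lt0r_neq0.
  by apply: rpredM; rewrite ?rpredV ?C21_real ?L2_real.
suff [] : u \is Num.real /\ v \is Num.real by [].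
apply: real_sum_sqr_sub.
  have -> : u + v = 2 * a - (p + 5 * a) by rewrite F7E; ring.
  by real_closure.
have -> : (u - v) ^+ 2 = L2 p q r s t / (3 * ((a - u) * (a - v)) ^+ 2).
  by rewrite L2E; field; rewrite !subr_eq0 au av.
by rewrite divr_ge0 ?(ltW L2_gt0) // mulr_ge0 // -realEsqr -F6E; real_closure.
Qed.

Section RealRootPosition.

Variables (R : numDomainType) (d u v : R).
Hypotheses (d_real : d \is Num.real) (u_real : u \is Num.real) (lt_uv : u < v).

Lemma mul_subr_gt0_outside : 0 < (d - u) * (d - v) -> d < u \/ v < d.
Proof.
case: (real_ltgtP d_real u_real) => [du|ud|<-]; [by left | | by rewrite subrr mul0r ltxx].
by rewrite pmulr_rgt0 ?subr_gt0 //; right.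
Qed.

Lemma mul_subr_lt0_between : (d - u) * (d - v) < 0 -> u < d < v.
Proof.
case: (real_ltgtP d_real u_real) => [du|ud|<-]; last by rewrite subrr mul0r ltxx.
  by rewrite nmulr_rlt0 ?subr_lt0 // subr_gt0 => /lt_trans/(_ (lt_trans du lt_uv)); rewrite ltxx.
by rewrite pmulr_rlt0 ?subr_gt0 // subr_lt0 => dv; apply/andP.
Qed.

Lemma real_root_position :
  [/\ 0 < (d - u) * (d - v) -> (d - u) + (d - v) < 0 -> d < u,
      (d - u) * (d - v) < 0 -> u < d < v
    & 0 < (d - u) * (d - v) -> 0 < (d - u) + (d - v) -> v < d].
Proof.
split; [|exact: mul_subr_lt0_between|].
- move=> /mul_subr_gt0_outside[//|vd].
  have : 0 < (d - u) + (d - v) by rewrite addr_gt0 // subr_gt0 // (lt_trans lt_uv vd).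
  by move=> /lt_trans/[apply]; rewrite ltxx.
- move=> /mul_subr_gt0_outside[du|//].
  have : (d - u) + (d - v) < 0.
    by rewrite -[0](addr0 0) ltrD // subr_lt0 // (lt_trans du lt_uv).
  by move=> /lt_trans/[apply]; rewrite ltxx.
Qed.

End RealRootPosition.

Lemma triple_root_real_cases (R : numDomainType) (P : {poly R}) (a u v : R) :
  a \is Num.real -> u \is Num.real -> v \is Num.real -> u != v ->
  P = ('X - a%:P) ^+ 3 * ('X - u%:P) * ('X - v%:P) ->
  [/\ 0 < (a - u) * (a - v) -> (a - u) + (a - v) < 0 ->
        exists u' v', [/\ a < u', u' < v' &
          P = ('X - a%:P) ^+ 3 * ('X - u'%:P) * ('X - v'%:P)],
      (a - u) * (a - v) < 0 ->
        exists u' v', [/\ u' < a, a < v' &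
          P = ('X - a%:P) ^+ 3 * ('X - u'%:P) * ('X - v'%:P)]
    & 0 < (a - u) * (a - v) -> 0 < (a - u) + (a - v) ->
        exists u' v', [/\ u' < v', v' < a &
          P = ('X - a%:P) ^+ 3 * ('X - u'%:P) * ('X - v'%:P)]].
Proof.
move=> a_real; wlog lt_uv : u v / u < v => [wlog_uv u_real v_real|u_real _ _ ->].
  case: (real_ltgtP u_real v_real) => [lt_uv|lt_vu|//] _.
    by apply: wlog_uv; rewrite ?lt_eqF.
  move=> P_eq; rewrite [(a - u) * _]mulrC [(a - u) + _]addrC.
  by apply: wlog_uv; rewrite ?lt_eqF // P_eq mulrAC.
have [pos_neg between pos_pos] := real_root_position a_real u_real lt_uv.
split=> [Fpos Fneg | Fneg | Fpos Fpos']; exists u, v.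
- by split; rewrite ?pos_neg.
- by case/andP: (between Fneg).
- by split; rewrite ?pos_pos.
Qed.

Theorem mainTheorem10 (C : numClosedFieldType) (p q r s t : C)
  (alpha : 'I_5 -> C) :
  p \is Num.real -> q \is Num.real -> r \is Num.real ->
  s \is Num.real -> t \is Num.real ->
  quintic p q r s t = \prod_(i < 5) ('X - (alpha i)%:P) ->
  disc5 alpha = 0 -> L1 p q r s t = 0 -> L2 p q r s t != 0 ->
  D2 p q r s t = 0 ->
  let d := C21 p q r s t / L2 p q r s t in
  let F7 := p + 5 * d in
  let F6 := q + 4 * p * d + 10 * d ^+ 2 in
  [/\ #|[set i : 'I_5 | alpha i == d]| = 3%N,
      quintic p q r s t \Po ('X + d%:P) = 'X^3 * ('X^2 + F7%:P * 'X + F6%:P)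
    & 0 < L2 p q r s t ->
      [/\ forall i, alpha i \is Num.real,
          0 < F6 -> F7 < 0 ->
            exists u v : C, [/\ d < u, u < v &
              quintic p q r s t = ('X - d%:P) ^+ 3 * ('X - u%:P) * ('X - v%:P)],
          F6 < 0 ->
            exists u v : C, [/\ u < d, d < v &
              quintic p q r s t = ('X - d%:P) ^+ 3 * ('X - u%:P) * ('X - v%:P)]
        & 0 < F6 -> 0 < F7 ->
            exists u v : C, [/\ u < v, v < d &
              quintic p q r s t = ('X - d%:P) ^+ 3 * ('X - u%:P) * ('X - v%:P)]]].
Proof.
move=> p_real q_real r_real s_real t_real f_roots disc_0 L1_0 L2_neq0 D2_0 d F7 F6.
have [a [u [v f_auv]]] := quintic_triple_root f_roots disc_0 L1_0 L2_neq0 D2_0.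
have [_ C21E F7E F6E] := triple_root_invariants f_auv.
have [uv au av] := triple_root_distinct f_auv L2_neq0.
have da : d = a by rewrite /d C21E mulfK.
rewrite /F7 /F6 da F7E F6E; split.
- rewrite card_fiber_mu -f_roots f_auv.
  by rewrite mupMl ?root_XsubC // mupMl ?root_XsubC // mup_XsubCX eqxx.
- by rewrite f_auv triple_root_shift.
move=> L2_gt0.
have [a_real u_real v_real] := triple_root_real p_real q_real r_real s_real t_real f_auv L2_gt0.
have [pos_neg between pos_pos] := triple_root_real_cases a_real u_real v_real uv f_auv.
split=> // i.
have : root (\prod_(j < 5) ('X - (alpha j)%:P)) (alpha i).
  by apply/rootP; rewrite horner_prod; apply/eqP/prodf_eq0; exists i; rewrite ?hornerXsubC ?subrr.
rewrite -f_roots f_auv rootM rootM root_exp_XsubC !root_XsubC.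
by case/orP=> [/orP[]|] /eqP->.
Qed.
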